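(* Let $q_1^2(x),q_2^2(x)$ be positive piecewise-constant functions on $[0,1]$ with finitely many discontinuity points, and set $a_j(x):=q_j^{-2}(x)$, $j=1,2$. For $k\ge 0$ let $\psi_j(x,k)$ be the solution of $$-\psi_j''(x,k)+k^2q_j^2(x)\psi_j(x,k)=0,\quad 0\le x\le 1,\qquad \psi_j'(0,k)=0,\quad \psi_j(0,k)=1,$$ and for $\lambda\ge 0$ let $v_j(x,\lambda)$ be a nontrivial solution of $$\lambda v_j-(a_j(x)v_j')'=0,\quad 0\le x\le 1,\qquad v_j(0,\lambda)=0$$ (primes denote $d/dx$). Then the sets $\{\psi_1(x,k)\psi_2(x,k)\}_{k\ge 0}$ and $\{v_1'(x,\lambda)v_2'(x,\lambda)\}_{\lambda\ge 0}$ are dense in the set $\Pi$ of piecewise-constant functions on $[0,1]$ (with finitely many discontinuity points), in the following sense: if $h\in\Pi$ and $\int_0^1 h(x)\psi_1(x,k)\psi_2(x,k)\,dx=0$ for all $k>0$, then $h=0$; and if $h\in\Pi$ and $\int_0^1 h(x)v_1'(x,\lambda)v_2'(x,\lambda)\,dx=0$ for all $\lambda>0$, then $h=0$.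
   Context: $\Pi$ denotes the set of piecewise-constant functions on $[0,1]$ with finitely many discontinuity points. The solutions of the differential equations with piecewise-constant coefficients are understood in the usual sense for such equations (e.g. $\psi_j$ is the solution of the integral equation $\psi_j(x,k)=1+k^2\int_0^x(x-s)q_j^2(s)\psi_j(s,k)\,ds$, and $a_jv_j'$ is continuous). The property stated (completeness of products of solutions) is called Property C of the pair of operators $\ell_j=-\frac{d^2}{dx^2}+k^2q_j^2(x)$, resp. $L_ju=-[a_j(x)u']'+\lambda u$. *)

From Stdlib Require Import Reals List.
From Coquelicot Require Import Coquelicot.
Open Scope R_scope.

(* Values at the t_i are arbitrary. *)
Definition pw_const (f : R -> R) : Prop :=
  exists (n : nat) (t : nat -> R),
    t O = 0 /\ t n = 1 /\
    (forall i, (i < n)%nat -> t i < t (S i)) /\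
    (forall i, (i < n)%nat -> exists c : R,
        forall x, t i < x < t (S i) -> f x = c).

(* h = 0 as an element of Pi: h vanishes on [0,1] except at finitely many points. *)
Definition zero_on_01 (h : R -> R) : Prop :=
  exists l : list R, forall x, 0 <= x <= 1 -> ~ In x l -> h x = 0.

(* psi(., k) solves psi(x,k) = 1 + k^2 int_0^x (x-s) q^2(s) psi(s,k) ds on [0,1],
   for every k >= 0 (the usual sense of -psi'' + k^2 q^2 psi = 0, psi(0)=1, psi'(0)=0). *)
Definition is_psi (q : R -> R) (psi : R -> R -> R) : Prop :=
  forall k, 0 <= k -> forall x, 0 <= x <= 1 ->
    exists I, is_RInt (fun s => (x - s) * (q s ^ 2) * psi s k) 0 x I /\
              psi x k = 1 + k ^ 2 * I.

(* v(., lambda) is a nontrivial solution of lambda v - (a v')' = 0, v(0)=0, a = q^{-2},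
   in the usual sense: with the flux w = a v' (continuous), v(x) = int_0^x q^2 w and
   w(x) = w(0) + lambda int_0^x v, for every lambda >= 0. *)
Definition is_v (q : R -> R) (v : R -> R -> R) : Prop :=
  forall lam, 0 <= lam ->
    v 0 lam = 0 /\
    (exists x, 0 <= x <= 1 /\ v x lam <> 0) /\
    exists w : R -> R, forall x, 0 <= x <= 1 ->
      is_RInt (fun s => q s ^ 2 * w s) 0 x (v x lam) /\
      exists I, is_RInt (fun s => v s lam) 0 x I /\ w x = w 0 + lam * I.

(* If [h] is not a.e. zero, take the last interval [(a, b)] on which [h] is a nonzero constant
   [C], with [h = 0] a.e. after [b].  The weights [f = psi1 psi2], resp. [f = w1 w2] (where
   [v_j' = +-q_j^2 w_j] with the fluxes [w_j]), are positive and nondecreasing, and across any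
   [c < d] they grow by a factor [1 + r (d - c)^2] with a rate [r] proportional to [k^2].
   Splitting [int h f = 0] at [c < d] inside [(a, b)], the part over [(0, c)] is at most
   [sup |h| f(c)] while the part over [(d, b)] is at least [(b - d) |C| f(d)], so
   [(b - d) |C| (1 + r (d - c)^2) <= sup |h|] for every [k], which is absurd.  Positivity and
   growth of the weights follow from their integral equations by a bootstrap over steps of a
   fixed length. *)

From Stdlib Require Import Reals List Lra Lia Psatz Classical.
From Coquelicot Require Import Coquelicot.
Open Scope R_scope.

(* Coquelicot's lemmas for a general normed module, restated with the operations of [R] so that
   they rewrite and combine with [lra]. *)
Lemma RInt_Chasles_R (f : R -> R) a b c :
  ex_RInt f a b -> ex_RInt f b c -> RInt f a b + RInt f b c = RInt f a c.
Proof. exact (RInt_Chasles f a b c). Qed.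

Lemma is_RInt_unique_R (f : R -> R) a b (l : R) : is_RInt f a b l -> RInt f a b = l.
Proof. exact (is_RInt_unique f a b l). Qed.

Lemma is_RInt_scal_R (f : R -> R) a b (C I : R) :
  is_RInt f a b I -> is_RInt (fun x => C * f x) a b (C * I).
Proof. exact (is_RInt_scal f a b C I). Qed.

Lemma is_RInt_opp_R (f : R -> R) a b (I : R) :
  is_RInt f a b I -> is_RInt (fun x => - f x) a b (- I).
Proof. exact (is_RInt_opp f a b I). Qed.

Lemma ex_RInt_sub (f : R -> R) a b c d :
  a <= c -> c <= d -> d <= b -> ex_RInt f a b -> ex_RInt f c d.
Proof.
  intros Hac Hcd Hdb Hf.
  apply (ex_RInt_Chasles_2 f a c d); [lra|].
  apply (ex_RInt_Chasles_1 f a d b); [lra|exact Hf].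
Qed.

Lemma RInt_primitive (f P : R -> R) a b :
  (forall x, a <= x <= b -> is_RInt f a x (P x)) ->
  forall x y, a <= x -> x <= y -> y <= b -> ex_RInt f x y /\ RInt f x y = P y - P x.
Proof.
  intros HP x y Hax Hxy Hyb.
  assert (Hay : ex_RInt f a y) by (eexists; apply HP; lra).
  assert (Hax' : ex_RInt f a x) by (apply (ex_RInt_sub f a y); auto; lra).
  assert (Hxy' : ex_RInt f x y) by (apply (ex_RInt_sub f a y); auto; lra).
  split; [exact Hxy'|].
  pose proof (RInt_Chasles_R f a x y Hax' Hxy') as Ch.
  rewrite (is_RInt_unique_R f a y (P y)), (is_RInt_unique_R f a x (P x)) in Ch
    by (apply HP; lra).
  lra.
Qed.

Lemma is_RInt_ext_off_list (f g : R -> R) (l : list R) : forall a b (I : R), a <= b ->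
  (forall x, a < x < b -> ~ In x l -> f x = g x) -> is_RInt f a b I -> is_RInt g a b I.
Proof.
  induction l as [|p l IH]; intros a b I Hab Hfg Hf.
  - apply is_RInt_ext with f; [|exact Hf]. intros x Hx.
    rewrite Rmin_left, Rmax_right in Hx by lra. apply Hfg; auto.
  - destruct (classic (a < p < b)) as [Hp|Hp].
    + assert (E : ex_RInt f a b) by (eexists; eauto).
      assert (E1 : ex_RInt f a p) by (apply (ex_RInt_sub f a b); auto; lra).
      assert (E2 : ex_RInt f p b) by (apply (ex_RInt_sub f a b); auto; lra).
      replace I with (RInt f a p + RInt f p b)
        by (rewrite (RInt_Chasles_R f a p b E1 E2); apply is_RInt_unique_R; auto).
      apply (is_RInt_Chasles g a p b (RInt f a p) (RInt f p b)).
      * apply IH; [lra| |exact (RInt_correct f a p E1)].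
        intros x Hx Hn. apply Hfg; [lra|]. intros [Hx'|Hx']; [lra|tauto].
      * apply IH; [lra| |exact (RInt_correct f p b E2)].
        intros x Hx Hn. apply Hfg; [lra|]. intros [Hx'|Hx']; [lra|tauto].
    + apply IH; auto. intros x Hx Hn. apply Hfg; auto. intros [Hx'|Hx']; [subst; lra|tauto].
Qed.

Lemma is_RInt_shift_id (c d : R) : is_RInt (fun s => s - c) c d ((d - c) ^ 2 / 2).
Proof.
  replace ((d - c) ^ 2 / 2) with (minus ((d - c) ^ 2 / 2) ((c - c) ^ 2 / 2))
    by (unfold minus, plus, opp; simpl; field).
  apply (is_RInt_derive (fun s => (s - c) ^ 2 / 2)).
  - intros x _. auto_derive; [exact I|field].
  - intros x _. apply (continuous_minus (fun s : R => s) (fun _ : R => c) x);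
      [apply continuous_id|apply continuous_const].
Qed.

Lemma is_RInt_dist_to (c d : R) : is_RInt (fun s => d - s) c d ((d - c) ^ 2 / 2).
Proof.
  replace ((d - c) ^ 2 / 2) with (minus (- (d - d) ^ 2 / 2) (- (d - c) ^ 2 / 2))
    by (unfold minus, plus, opp; simpl; field).
  apply (is_RInt_derive (fun s => - (d - s) ^ 2 / 2)).
  - intros x _. auto_derive; [exact I|field].
  - intros x _. apply (continuous_minus (fun _ : R => d) (fun s : R => s) x);
      [apply continuous_const|apply continuous_id].
Qed.

Lemma step_induction (P : R -> Prop) (delta : R) : 0 < delta -> P 0 ->
  (forall x1 y, 0 <= x1 -> x1 < y <= x1 + delta ->
     (forall s, 0 <= s <= x1 -> P s) -> P y) ->
  forall x, 0 <= x -> P x.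
Proof.
  intros Hd H0 Hstep.
  assert (Hn : forall n x, 0 <= x <= INR n * delta -> P x).
  { induction n as [|n IH]; intros x Hx.
    - simpl in Hx. replace x with 0 by lra. exact H0.
    - rewrite S_INR in Hx.
      destruct (Rle_dec x (INR n * delta)) as [Hle|Hgt]; [apply IH; lra|].
      apply (Hstep (INR n * delta)); [pose proof (pos_INR n); nra|lra|].
      intros s Hs. apply IH; lra. }
  intros x Hx. destruct (INR_unbounded (x / delta)) as [n Hn'].
  apply (Hn n). split; [lra|].
  assert (x / delta * delta = x) by (field; lra). nra.
Qed.

Lemma eq0_of_halving (P : R -> Prop) (u : R -> R) (B : R) :
  (forall s, P s -> Rabs (u s) <= B) ->
  (forall beta, (forall s, P s -> Rabs (u s) <= beta) -> forall s, P s -> Rabs (u s) <= beta / 2) ->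
  forall s, P s -> u s = 0.
Proof.
  intros HB Hhalf s Hs.
  assert (Hn : forall n t, P t -> Rabs (u t) <= B * (/ 2) ^ n).
  { induction n as [|n IH]; intros t Ht; [simpl; rewrite Rmult_1_r; auto|].
    replace (B * (/ 2) ^ S n) with (B * (/ 2) ^ n / 2) by (simpl; field).
    apply Hhalf; auto. }
  apply Rabs_eq_0, Rle_antisym; [|apply Rabs_pos].
  apply Rnot_lt_le; intros Hpos.
  assert (HB1 : 0 < Rabs B + 1) by (pose proof (Rabs_pos B); lra).
  destruct (pow_lt_1_zero (/ 2) ltac:(rewrite Rabs_pos_eq; lra) (Rabs (u s) / (Rabs B + 1))
    ltac:(apply Rdiv_lt_0_compat; auto)) as [N HN].
  specialize (HN N (Nat.le_refl N)). specialize (Hn N s Hs).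
  assert (Hp : 0 <= (/ 2) ^ N) by (apply pow_le; lra).
  rewrite Rabs_pos_eq in HN by auto.
  assert ((/ 2) ^ N * (Rabs B + 1) < Rabs (u s)).
  { apply (Rmult_lt_compat_r (Rabs B + 1)) in HN; auto.
    unfold Rdiv in HN. rewrite Rmult_assoc, Rinv_l in HN by lra. lra. }
  assert (B * (/ 2) ^ N <= Rabs B * (/ 2) ^ N) by (apply Rmult_le_compat_r; auto; apply Rle_abs).
  nra.
Qed.

Lemma exists_small_step (A c : R) : 0 < c -> exists delta, 0 < delta <= 1 /\ A * delta <= c.
Proof.
  intros Hc. pose proof (Rabs_pos A). set (delta := c / (Rabs A + c)).
  assert (Hd : delta * (Rabs A + c) = c) by (unfold delta; field; lra).
  assert (Hd0 : 0 < delta) by (unfold delta; apply Rdiv_lt_0_compat; lra).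
  assert (0 <= delta * Rabs A) by (apply Rmult_le_pos; lra).
  assert (0 <= delta * c) by (apply Rmult_le_pos; lra).
  assert (A * delta <= Rabs A * delta) by (apply Rmult_le_compat_r; [lra|apply Rle_abs]).
  exists delta. split; [split; [lra|]|lra].
  apply (Rmult_le_reg_r c); lra.
Qed.

Lemma exists_pos_sqr_mult_ge (al r0 : R) : 0 < al -> exists k, 0 < k /\ r0 <= k ^ 2 * al.
Proof.
  intros Hal. set (t := Rabs r0 / al).
  assert (Ht : 0 <= t) by (apply Rdiv_le_0_compat; [apply Rabs_pos|auto]).
  assert (Hta : t * al = Rabs r0) by (unfold t; field; lra).
  exists (1 + t). split; [lra|].
  assert (0 <= (t + t * t) * al) by (apply Rmult_le_pos; nra).
  pose proof (Rle_abs r0). nra.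
Qed.

Definition increasing_at_rate (f : R -> R) (r : R) : Prop :=
  (forall x, 0 <= x <= 1 -> 0 < f x) /\
  (forall c d, 0 <= c -> c < d -> d <= 1 -> f c * (1 + r * (d - c) ^ 2) <= f d).

Lemma increasing_at_rate_le (f : R -> R) (r : R) : 0 <= r -> increasing_at_rate f r ->
  forall x y, 0 <= x -> x <= y -> y <= 1 -> f x <= f y.
Proof.
  intros Hr [Hpos Hgrow] x y Hx Hxy Hy.
  destruct (Req_dec x y) as [->|Hne]; [lra|].
  specialize (Hgrow x y Hx ltac:(lra) Hy). specialize (Hpos x ltac:(lra)).
  assert (0 <= r * (y - x) ^ 2) by (apply Rmult_le_pos; [lra|apply pow2_ge_0]).
  nra.
Qed.

Lemma increasing_at_rate_mul (f g : R -> R) (r s : R) : 0 <= s ->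
  increasing_at_rate f r -> increasing_at_rate g s ->
  increasing_at_rate (fun x => f x * g x) r.
Proof.
  intros Hs Hf Hg. pose proof (increasing_at_rate_le g s Hs Hg) as Hgle.
  destruct Hf as [Hfpos Hfgrow], Hg as [Hgpos _]. split.
  - intros x Hx. apply Rmult_lt_0_compat; auto.
  - intros c d Hc Hcd Hd.
    specialize (Hfgrow c d Hc Hcd Hd). specialize (Hgle c d Hc ltac:(lra) Hd).
    specialize (Hgpos c ltac:(lra)). pose proof (Hfpos d ltac:(lra)).
    replace (f c * g c * (1 + r * (d - c) ^ 2)) with (f c * (1 + r * (d - c) ^ 2) * g c) by ring.
    apply Rle_trans with (f d * g c); [apply Rmult_le_compat_r|apply Rmult_le_compat_l]; lra.
Qed.

Definition last_block (h : R -> R) (a b C : R) (l : list R) : Prop :=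
  0 <= a /\ a < b /\ b <= 1 /\ C <> 0 /\
  (forall x, a < x < b -> h x = C) /\ (forall x, b < x < 1 -> ~ In x l -> h x = 0).

Definition orthogonal_to_steep_weights (h : R -> R) : Prop :=
  forall r0, exists r f, r0 <= r /\ increasing_at_rate f r /\
    is_RInt (fun x => h x * f x) 0 1 0.

Lemma orthogonal_to_steep_weights_ext (h1 h2 : R -> R) :
  (forall x, 0 <= x <= 1 -> h1 x = h2 x) ->
  orthogonal_to_steep_weights h1 -> orthogonal_to_steep_weights h2.
Proof.
  intros Heq Horth r0. destruct (Horth r0) as (r & f & Hr & Hf & Hint).
  exists r, f. split; [exact Hr|split; [exact Hf|]].
  apply (is_RInt_ext (fun x => h1 x * f x)); [|exact Hint].
  intros x Hx. rewrite Rmin_left, Rmax_right in Hx by lra. rewrite Heq by lra. reflexivity.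
Qed.

Lemma RInt_zero_tail_bound (G : R -> R) (c d b A B : R) :
  0 <= c -> c <= d -> d <= b -> b <= 1 -> is_RInt G 0 1 0 -> is_RInt G b 1 0 ->
  (forall x, 0 <= x <= c -> Rabs (G x) <= A) -> (forall x, c < x < d -> 0 <= G x) ->
  (forall x, d < x < b -> B <= G x) -> (b - d) * B <= c * A.
Proof.
  intros Hc Hcd Hdb Hb HG HGb HA Hcd0 HB.
  assert (E : ex_RInt G 0 1) by (eexists; exact HG).
  assert (E0c : ex_RInt G 0 c) by (apply (ex_RInt_sub G 0 1); auto; lra).
  assert (Ecd : ex_RInt G c d) by (apply (ex_RInt_sub G 0 1); auto; lra).
  assert (Edb : ex_RInt G d b) by (apply (ex_RInt_sub G 0 1); auto; lra).
  assert (Eb1 : ex_RInt G b 1) by (eexists; exact HGb).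
  assert (Hsum : RInt G 0 c + RInt G c d + RInt G d b + RInt G b 1 = 0).
  { rewrite (RInt_Chasles_R G 0 c d), (RInt_Chasles_R G 0 d b), (RInt_Chasles_R G 0 b 1);
      auto; try (apply (ex_RInt_sub G 0 1); auto; lra).
    apply is_RInt_unique_R; exact HG. }
  rewrite (is_RInt_unique_R G b 1 0 HGb) in Hsum.
  assert (B1 : Rabs (RInt G 0 c) <= (c - 0) * A) by (apply abs_RInt_le_const; auto).
  assert (B2 : 0 <= RInt G c d) by (apply RInt_ge_0; auto).
  assert (B3 : RInt (fun _ => B) d b <= RInt G d b)
    by (apply RInt_le; auto; apply ex_RInt_const).
  rewrite RInt_const in B3. change (scal (b - d) B) with ((b - d) * B) in B3.
  apply Rabs_le_between in B1. lra.
Qed.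

(* Multiplying by [C], the integrand is [C^2 f >= 0] on the block and [f] is largest at its
   right end, so the block dominates everything before it. *)
Lemma last_block_weight_bound (h f : R -> R) (Mh a b C c d r : R) (l : list R) :
  (forall x, 0 <= x <= 1 -> Rabs (h x) <= Mh) -> last_block h a b C l ->
  0 <= r -> increasing_at_rate f r -> is_RInt (fun x => h x * f x) 0 1 0 ->
  a <= c -> c <= d -> d <= b ->
  (b - d) * Rabs C * f d <= Mh * f c.
Proof.
  intros HMh (Ha & Hab & Hb & HC & Hin & Htail) Hr Hf Hint Hac Hcd Hdb.
  pose proof (increasing_at_rate_le f r Hr Hf) as Hfle. destruct Hf as [Hfpos _].
  set (G := fun x => C * (h x * f x)).
  assert (HG : is_RInt G 0 1 0).
  { pose proof (is_RInt_scal_R _ 0 1 C 0 Hint) as H. rewrite Rmult_0_r in H. exact H. }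
  assert (HGb : is_RInt G b 1 0).
  { apply (is_RInt_ext_off_list (fun _ => 0) G l b 1 0 Hb).
    - intros x Hx Hn. unfold G. rewrite Htail by auto. ring.
    - pose proof (is_RInt_const b 1 0) as H. change (scal (1 - b) 0) with ((1 - b) * 0) in H.
      rewrite Rmult_0_r in H. exact H. }
  assert (HMh0 : 0 <= Mh) by (pose proof (Rabs_pos (h 0)); specialize (HMh 0 ltac:(lra)); lra).
  assert (Hfc : 0 < f c) by (apply Hfpos; lra).
  assert (HaC : 0 < Rabs C) by (apply Rabs_pos_lt; auto).
  assert (HCC : C * C = Rabs C * Rabs C)
    by (destruct (Rcase_abs C); [rewrite Rabs_left|rewrite Rabs_right]; lra || ring).
  assert (Hsplit := RInt_zero_tail_bound G c d b (Rabs C * Mh * f c) (C * C * f d)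
    ltac:(lra) Hcd Hdb Hb HG HGb).
  assert (Hbound : (b - d) * (C * C * f d) <= c * (Rabs C * Mh * f c)).
  { apply Hsplit; intros x Hx; unfold G.
    - rewrite !Rabs_mult, (Rabs_pos_eq (f x)) by (apply Rlt_le, Hfpos; lra).
      rewrite Rmult_assoc. apply Rmult_le_compat_l; [apply Rabs_pos|].
      apply Rmult_le_compat; [apply Rabs_pos|apply Rlt_le, Hfpos; lra|apply HMh; lra|].
      apply Hfle; lra.
    - rewrite Hin by lra. pose proof (Hfpos x ltac:(lra)). nra.
    - rewrite Hin by lra. assert (f d <= f x) by (apply Hfle; lra). nra. }
  assert (c * (Rabs C * Mh * f c) <= Rabs C * Mh * f c).
  { assert (0 <= Rabs C * Mh * f c) by (apply Rmult_le_pos; [apply Rmult_le_pos|]; lra).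
    nra. }
  rewrite HCC in Hbound. apply (Rmult_le_reg_l (Rabs C)); auto. lra.
Qed.

Lemma last_block_not_orthogonal (h : R -> R) (Mh a b C : R) (l : list R) :
  (forall x, 0 <= x <= 1 -> Rabs (h x) <= Mh) -> last_block h a b C l ->
  ~ orthogonal_to_steep_weights h.
Proof.
  intros HMh Hblock Horth. pose proof Hblock as (Ha & Hab & Hb & HC & _).
  set (c := (2 * a + b) / 3). set (d := (a + 2 * b) / 3).
  set (A := (b - d) * Rabs C).
  assert (HA : 0 < A) by (apply Rmult_lt_0_compat; [unfold d; lra|apply Rabs_pos_lt; auto]).
  assert (Hdc : 0 < (d - c) ^ 2) by (apply pow_lt; unfold c, d; lra).
  destruct (Horth (Rabs Mh / (A * (d - c) ^ 2))) as (r & f & Hr & Hf & Hint).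
  assert (Hr0 : 0 <= r)
    by (eapply Rle_trans; [|exact Hr]; apply Rdiv_le_0_compat; [apply Rabs_pos|nra]).
  assert (Hbound := last_block_weight_bound h f Mh a b C c d r l HMh Hblock Hr0 Hf Hint
    ltac:(unfold c; lra) ltac:(unfold c, d; lra) ltac:(unfold d; lra)).
  fold A in Hbound. destruct Hf as [Hfpos Hgrow].
  specialize (Hgrow c d ltac:(unfold c; lra) ltac:(unfold c, d; lra) ltac:(unfold d; lra)).
  assert (Hfc : 0 < f c) by (apply Hfpos; unfold c; lra).
  assert (Hsteep : Rabs Mh <= A * (r * (d - c) ^ 2)).
  { replace (Rabs Mh) with (A * (Rabs Mh / (A * (d - c) ^ 2) * (d - c) ^ 2)) by (field; split; unfold c, d; lra).
    apply Rmult_le_compat_l; [lra|]. apply Rmult_le_compat_r; lra. }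
  assert (A * (1 + r * (d - c) ^ 2) <= Mh).
  { apply (Rmult_le_reg_r (f c)); auto. nra. }
  pose proof (Rle_abs Mh). lra.
Qed.

Lemma partition_le (n : nat) (t : nat -> R) : (forall i, (i < n)%nat -> t i < t (S i)) ->
  forall i j, (i <= j)%nat -> (j <= n)%nat -> t i <= t j.
Proof.
  intros Ht i j Hij. induction Hij as [|j Hij IH]; intros Hj; [lra|].
  specialize (IH ltac:(lia)). specialize (Ht j ltac:(lia)). lra.
Qed.

Lemma partition_locate (n : nat) (t : nat -> R) : (forall i, (i < n)%nat -> t i < t (S i)) ->
  forall j, (j <= n)%nat -> forall x, t O < x <= t j ->
  exists i, (i < j)%nat /\ t i < x <= t (S i).
Proof.
  intros Ht j. induction j as [|j IH]; intros Hj x Hx; [lra|].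
  destruct (Rle_dec x (t j)) as [H|H].
  - destruct (IH ltac:(lia) x ltac:(lra)) as (i & Hi & Hxi). exists i. split; [lia|auto].
  - exists j. split; [lia|lra].
Qed.

Lemma pw_const_bounded (f : R -> R) : pw_const f ->
  exists M, forall x, 0 <= x <= 1 -> Rabs (f x) <= M.
Proof.
  intros (n & t & H0 & H1 & Ht & Hc).
  assert (Hj : forall j, (j <= n)%nat -> exists M, forall x, 0 <= x <= t j -> Rabs (f x) <= M).
  { induction j as [|j IH]; intros Hj.
    - exists (Rabs (f 0)). intros x Hx. rewrite H0 in Hx. replace x with 0 by lra. lra.
    - destruct (IH ltac:(lia)) as [M HM]. destruct (Hc j ltac:(lia)) as [c Hcj].
      exists (Rmax M (Rmax (Rabs c) (Rabs (f (t (S j)))))).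
      pose proof (Rmax_l M (Rmax (Rabs c) (Rabs (f (t (S j)))))).
      pose proof (Rmax_r M (Rmax (Rabs c) (Rabs (f (t (S j)))))).
      pose proof (Rmax_l (Rabs c) (Rabs (f (t (S j))))).
      pose proof (Rmax_r (Rabs c) (Rabs (f (t (S j))))).
      intros x Hx. destruct (Rle_dec x (t j)); [specialize (HM x ltac:(lra)); lra|].
      destruct (Req_dec x (t (S j))) as [->|E]; [lra|].
      rewrite (Hcj x ltac:(lra)). lra. }
  destruct (Hj n (Nat.le_refl n)) as [M HM]. exists M. intros x Hx. apply HM. lra.
Qed.

Lemma pw_const_pos_lower_bound (f : R -> R) : pw_const f -> (forall x, 0 <= x <= 1 -> 0 < f x) ->
  exists m, 0 < m /\ forall x, 0 <= x <= 1 -> m <= f x.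
Proof.
  intros Hf Hpos.
  assert (Hinv : pw_const (fun x => / f x)).
  { destruct Hf as (n & t & H0 & H1 & Ht & Hc). exists n, t. repeat split; auto.
    intros i Hi. destruct (Hc i Hi) as [c Hcc]. exists (/ c). intros x Hx. rewrite Hcc; auto. }
  destruct (pw_const_bounded _ Hinv) as [M HM].
  assert (HM0 : 0 < M).
  { specialize (HM 0 ltac:(lra)). pose proof (Rinv_0_lt_compat _ (Hpos 0 ltac:(lra))).
    rewrite Rabs_pos_eq in HM; lra. }
  exists (/ M). split; [apply Rinv_0_lt_compat; auto|].
  intros x Hx. specialize (HM x Hx). specialize (Hpos x Hx).
  pose proof (Rinv_0_lt_compat _ Hpos). rewrite Rabs_pos_eq in HM by lra.
  rewrite <- (Rinv_inv (f x)). apply Rinv_le_contravar; auto.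
Qed.

Definition locally_constant_at (f : R -> R) (x : R) : Prop :=
  exists a b c, a < x < b /\ forall y, a < y < b -> f y = c.

Lemma pw_const_locally_constant (f : R -> R) : pw_const f ->
  exists l, forall x, 0 < x < 1 -> ~ In x l -> locally_constant_at f x.
Proof.
  intros (n & t & H0 & H1 & Ht & Hc).
  exists (map t (seq 0 (S n))). intros x Hx Hn.
  destruct (partition_locate n t Ht n (Nat.le_refl n) x ltac:(lra)) as (i & Hi & Hxi).
  destruct (Hc i Hi) as [c Hcc].
  assert (x <> t (S i)) by (intros E; apply Hn; rewrite E; apply in_map, in_seq; lia).
  exists (t i), (t (S i)), c. split; [lra|auto].
Qed.

Definition left_constant (f : R -> R) : Prop :=
  forall b, 0 < b <= 1 -> exists a c, a < b /\ forall x, a < x < b -> f x = c.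

Lemma pw_const_left_constant (f : R -> R) : pw_const f -> left_constant f.
Proof.
  intros (n & t & H0 & H1 & Ht & Hc) b Hb.
  destruct (partition_locate n t Ht n (Nat.le_refl n) b ltac:(lra)) as (i & Hi & Hbi).
  destruct (Hc i Hi) as [c Hcc]. exists (t i), c. split; [lra|].
  intros x Hx. apply Hcc. lra.
Qed.

Lemma left_constant_mul (f g : R -> R) :
  left_constant f -> left_constant g -> left_constant (fun x => f x * g x).
Proof.
  intros Hf Hg b Hb.
  destruct (Hf b Hb) as (a1 & c1 & Ha1 & Hc1), (Hg b Hb) as (a2 & c2 & Ha2 & Hc2).
  exists (Rmax a1 a2), (c1 * c2). split; [apply Rmax_lub_lt; auto|].
  intros x Hx. pose proof (Rmax_l a1 a2). pose proof (Rmax_r a1 a2).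
  rewrite Hc1, Hc2 by lra. reflexivity.
Qed.

Lemma exists_first_change (P : nat -> Prop) (n : nat) : P n -> ~ P O ->
  exists j, (j < n)%nat /\ P (S j) /\ ~ P j.
Proof.
  induction n as [|n IH]; intros Hn H0; [contradiction|].
  destruct (classic (P n)) as [H|H].
  - destruct (IH H H0) as (j & Hj & HPj). exists j. split; [lia|auto].
  - exists n. split; [lia|auto].
Qed.

Lemma pw_const_last_block (h : R -> R) : pw_const h -> ~ zero_on_01 h ->
  exists a b C l, last_block h a b C l.
Proof.
  intros (n & t & H0 & H1 & Ht & Hc) Hnz.
  set (Z := fun j => exists l, forall x, t j < x < 1 -> ~ In x l -> h x = 0).
  assert (Zn : Z n) by (exists nil; intros x Hx; lra).
  assert (Z0 : ~ Z O).
  { intros [l Hl]. apply Hnz. exists (0 :: 1 :: l). intros x Hx Hn.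
    apply Hl; [rewrite H0; split|].
    - destruct (Req_dec x 0) as [->|]; [exfalso; apply Hn; left; auto|lra].
    - destruct (Req_dec x 1) as [->|]; [exfalso; apply Hn; right; left; auto|lra].
    - intros Hin. apply Hn. right. right. auto. }
  destruct (exists_first_change Z n Zn Z0) as (j & Hj & [l Hl] & HnZ).
  destruct (Hc j Hj) as [c Hcc].
  pose proof (partition_le n t Ht O j ltac:(lia) ltac:(lia)).
  pose proof (partition_le n t Ht (S j) n ltac:(lia) ltac:(lia)).
  pose proof (Ht j Hj).
  exists (t j), (t (S j)), c, l. repeat split; try lra; auto.
  intros Ec. apply HnZ. exists (t (S j) :: l). intros x Hx Hn.
  destruct (Rlt_le_dec x (t (S j))); [rewrite Hcc; [auto|lra]|].
  destruct (Req_dec x (t (S j))) as [E|E]; [exfalso; apply Hn; left; auto|].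
  apply Hl; [lra|]. intros Hin. apply Hn. right. auto.
Qed.

Lemma last_block_mul (h g : R -> R) (a b C a1 Q : R) (l : list R) :
  last_block h a b C l -> a1 < b -> Q <> 0 -> (forall x, a1 < x < b -> g x = Q) ->
  last_block (fun x => h x * g x) (Rmax a a1) b (C * Q) l.
Proof.
  intros (Ha & Hab & Hb & HC & Hin & Htail) Ha1 HQ Hg.
  pose proof (Rmax_l a a1). pose proof (Rmax_r a a1).
  repeat split; try lra.
  - apply Rmax_lub_lt; auto.
  - apply Rmult_integral_contrapositive. auto.
  - intros x Hx. rewrite Hin, Hg by lra. reflexivity.
  - intros x Hx Hn. rewrite Htail by auto. ring.
Qed.

Lemma zero_on_01_of_weighted_orthogonality (h g : R -> R) (Mg : R) :
  pw_const h -> (forall x, 0 <= x <= 1 -> Rabs (g x) <= Mg) -> left_constant g ->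
  (forall x, 0 <= x <= 1 -> 0 < g x) ->
  orthogonal_to_steep_weights (fun x => h x * g x) -> zero_on_01 h.
Proof.
  intros Hh HMg Hgl Hgpos Horth. apply NNPP. intros Hnz.
  destruct (pw_const_last_block h Hh Hnz) as (a & b & C & l & Hblock).
  pose proof Hblock as (Ha & Hab & Hb & _).
  destruct (pw_const_bounded h Hh) as [Mh HMh].
  destruct (Hgl b ltac:(lra)) as (a1 & Q & Ha1 & HQ).
  assert (HQ0 : Q <> 0).
  { set (x := (Rmax a a1 + b) / 2). pose proof (Rmax_l a a1). pose proof (Rmax_r a a1).
    assert (Rmax a a1 < b) by (apply Rmax_lub_lt; auto).
    rewrite <- (HQ x) by (unfold x; lra). apply Rgt_not_eq, Hgpos. unfold x; lra. }
  apply (last_block_not_orthogonal (fun x => h x * g x) (Mh * Mg) (Rmax a a1) b (C * Q) l); auto.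
  - intros x Hx. rewrite Rabs_mult. apply Rmult_le_compat; auto using Rabs_pos.
  - apply last_block_mul; auto.
Qed.

Lemma zero_on_01_of_orthogonality (h : R -> R) :
  pw_const h -> orthogonal_to_steep_weights h -> zero_on_01 h.
Proof.
  intros Hh Horth. apply (zero_on_01_of_weighted_orthogonality h (fun _ => 1) 1 Hh).
  - intros x _. rewrite Rabs_R1. lra.
  - intros b Hb. exists 0, 1. split; [lra|auto].
  - intros x _. lra.
  - apply (orthogonal_to_steep_weights_ext h); auto. intros x _. ring.
Qed.

Section Psi.

Variables (q : R -> R) (psi : R -> R -> R) (k : R).
Hypothesis Hpsi : is_psi q psi.
Hypothesis Hk : 0 <= k.

Let kernel (x s : R) : R := (x - s) * (q s ^ 2) * psi s k.

Lemma psi_eq x : 0 <= x <= 1 ->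
  ex_RInt (kernel x) 0 x /\ psi x k = 1 + k ^ 2 * RInt (kernel x) 0 x.
Proof.
  intros Hx. destruct (Hpsi k Hk x Hx) as (I & HI & ->).
  split; [eexists; exact HI|]. rewrite (is_RInt_unique_R (kernel x) 0 x I HI). reflexivity.
Qed.

Lemma psi_ge_1_of_nonneg x : 0 <= x <= 1 -> (forall s, 0 < s < x -> 0 <= psi s k) ->
  1 <= psi x k.
Proof.
  intros Hx Hs. destruct (psi_eq x Hx) as [Ex ->].
  assert (0 <= RInt (kernel x) 0 x).
  { apply RInt_ge_0; [lra|auto|]. intros s Hs'. unfold kernel.
    pose proof (Hs s Hs'). pose proof (pow2_ge_0 (q s)).
    apply Rmult_le_pos; [apply Rmult_le_pos|]; lra. }
  pose proof (pow2_ge_0 k). nra.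
Qed.

(* Enlarging the upper limit from [x] to [y] only enlarges the weight [x - s], as long as
   [psi] is nonnegative on [(0, x)]. *)
Lemma psi_step x y : 0 <= x -> x <= y -> y <= 1 -> (forall s, 0 < s < x -> 0 <= psi s k) ->
  ex_RInt (kernel y) x y /\ psi x k + k ^ 2 * RInt (kernel y) x y <= psi y k.
Proof.
  intros Hx Hxy Hy Hs.
  destruct (psi_eq x ltac:(lra)) as [Ex Px]. destruct (psi_eq y ltac:(lra)) as [Ey Py].
  assert (E0x : ex_RInt (kernel y) 0 x) by (apply (ex_RInt_sub _ 0 y); auto; lra).
  assert (Exy : ex_RInt (kernel y) x y) by (apply (ex_RInt_sub _ 0 y); auto; lra).
  split; [exact Exy|].
  pose proof (RInt_Chasles_R _ 0 x y E0x Exy) as Ch.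
  assert (RInt (kernel x) 0 x <= RInt (kernel y) 0 x).
  { apply RInt_le; auto. intros s Hs'. unfold kernel.
    pose proof (Hs s Hs'). pose proof (pow2_ge_0 (q s)).
    assert (0 <= q s ^ 2 * psi s k) by (apply Rmult_le_pos; lra). nra. }
  rewrite Px, Py, <- Ch. pose proof (pow2_ge_0 k). nra.
Qed.

Lemma psi_kernel_bound : exists K, 0 <= K /\
  forall s y, 0 <= s -> s <= y -> y <= 1 -> Rabs (kernel y s) <= K.
Proof.
  destruct (psi_eq 1 ltac:(lra)) as [E1 _].
  destruct (ex_RInt_ub _ 0 1 E1) as [K HK].
  exists (Rmax K 0). split; [apply Rmax_r|]. intros s y Hs Hsy Hy.
  apply (Rle_trans _ (Rabs (kernel 1 s))); [|eapply Rle_trans; [apply HK|apply Rmax_l]].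
  - unfold kernel. rewrite !Rabs_mult, (Rabs_pos_eq (y - s)), (Rabs_pos_eq (1 - s)) by lra.
    rewrite !Rmult_assoc. apply Rmult_le_compat_r; [apply Rmult_le_pos; apply Rabs_pos|lra].
  - rewrite Rmin_left, Rmax_right; lra.
Qed.

(* Over a step of length [delta], [psi] drops by at most [1/2] from its value [>= 1] at the start. *)
Lemma psi_pos x : 0 <= x <= 1 -> 0 < psi x k.
Proof.
  destruct psi_kernel_bound as (K & HK0 & HK).
  destruct (exists_small_step (k ^ 2 * K) (/ 2)) as (delta & Hd & Hkd); [lra|].
  pose proof (pow2_ge_0 k) as Hk2.
  intros Hx. apply (step_induction (fun x => x <= 1 -> 0 < psi x k) delta); try lra.
  - intros _. destruct (psi_eq 0 ltac:(lra)) as [_ ->].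
    replace (RInt (kernel 0) 0 0) with 0 by (symmetry; exact (RInt_point 0 (kernel 0))).
    lra.
  - intros x1 y Hx1 Hy IH Hy1.
    assert (Hnn : forall s, 0 < s < x1 -> 0 <= psi s k)
      by (intros s Hs; apply Rlt_le, IH; lra).
    pose proof (psi_ge_1_of_nonneg x1 ltac:(lra) Hnn).
    destruct (psi_step x1 y Hx1 ltac:(lra) Hy1 Hnn) as [Exy Hstep].
    assert (B : Rabs (RInt (kernel y) x1 y) <= (y - x1) * K)
      by (apply abs_RInt_le_const; auto; try lra; intros s Hs; apply HK; lra).
    apply Rabs_le_between in B.
    assert ((y - x1) * K <= delta * K) by (apply Rmult_le_compat_r; lra).
    assert (k ^ 2 * (- (delta * K)) <= k ^ 2 * RInt (kernel y) x1 y)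
      by (apply Rmult_le_compat_l; lra).
    lra.
Qed.

Lemma psi_ge_1 x : 0 <= x <= 1 -> 1 <= psi x k.
Proof.
  intros Hx. apply psi_ge_1_of_nonneg; auto. intros s Hs. apply Rlt_le, psi_pos. lra.
Qed.

Lemma psi_le x y : 0 <= x -> x <= y -> y <= 1 -> psi x k <= psi y k.
Proof.
  intros Hx Hxy Hy.
  destruct (psi_step x y Hx Hxy Hy) as [Exy Hstep];
    [intros s Hs; apply Rlt_le, psi_pos; lra|].
  assert (0 <= RInt (kernel y) x y).
  { apply RInt_ge_0; auto. intros s Hs. unfold kernel.
    pose proof (psi_pos s ltac:(lra)). pose proof (pow2_ge_0 (q s)).
    apply Rmult_le_pos; [apply Rmult_le_pos|]; lra. }
  pose proof (pow2_ge_0 k). nra.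
Qed.

Lemma psi_increasing_at_rate (m : R) : (forall x, 0 <= x <= 1 -> m <= q x ^ 2) ->
  increasing_at_rate (fun x => psi x k) (k ^ 2 * m / 2).
Proof.
  intros Hqm. split; [exact psi_pos|]. intros c d Hc Hcd Hd.
  destruct (psi_step c d Hc ltac:(lra) Hd) as [Ecd Hstep];
    [intros s Hs; apply Rlt_le, psi_pos; lra|].
  assert (Hlow : is_RInt (fun s => (d - s) * (m * psi c k)) c d (m * psi c k * ((d - c) ^ 2 / 2))).
  { apply (is_RInt_ext (fun s => m * psi c k * (d - s))); [intros s _; apply Rmult_comm|].
    apply is_RInt_scal_R, is_RInt_dist_to. }
  assert ((m * psi c k * ((d - c) ^ 2 / 2)) <= RInt (kernel d) c d).
  { rewrite <- (is_RInt_unique_R _ _ _ _ Hlow). apply RInt_le; [lra|eexists; exact Hlow|auto|].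
    intros s Hs. unfold kernel.
    pose proof (psi_le c s Hc ltac:(lra) ltac:(lra)). pose proof (psi_ge_1 c ltac:(lra)).
    pose proof (Hqm s ltac:(lra)). pose proof (pow2_ge_0 (q s)).
    assert (m * psi c k <= q s ^ 2 * psi s k) by nra.
    rewrite Rmult_assoc. apply Rmult_le_compat_l; lra. }
  pose proof (pow2_ge_0 k). nra.
Qed.

End Psi.

Section Flux.

Variables (q V W : R -> R) (lam Mq : R).
Hypothesis Hlam : 0 < lam.
Hypothesis HqM : forall x, 0 <= x <= 1 -> q x ^ 2 <= Mq.
Hypothesis HV : forall x, 0 <= x <= 1 -> is_RInt (fun s => q s ^ 2 * W s) 0 x (V x).
Hypothesis HW : forall x, 0 <= x <= 1 -> is_RInt (fun s => lam * V s) 0 x (W x - W 0).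

Lemma flux_dV x y : 0 <= x -> x <= y -> y <= 1 ->
  ex_RInt (fun s => q s ^ 2 * W s) x y /\ RInt (fun s => q s ^ 2 * W s) x y = V y - V x.
Proof. exact (RInt_primitive _ V 0 1 HV x y). Qed.

Lemma flux_dW x y : 0 <= x -> x <= y -> y <= 1 ->
  ex_RInt (fun s => lam * V s) x y /\ RInt (fun s => lam * V s) x y = W y - W x.
Proof.
  intros Hx Hxy Hy. destruct (RInt_primitive _ (fun x => W x - W 0) 0 1 HW x y Hx Hxy Hy) as [E ->].
  split; [exact E|lra].
Qed.

Lemma flux_Mq_nonneg : 0 <= Mq.
Proof. pose proof (pow2_ge_0 (q 0)). specialize (HqM 0 ltac:(lra)). lra. Qed.

Lemma flux_W_bounded : exists Wm, 0 <= Wm /\ forall x, 0 <= x <= 1 -> Rabs (W x) <= Wm.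
Proof.
  assert (E : ex_RInt (fun s => lam * V s) 0 1) by (eexists; apply HW; lra).
  destruct (ex_RInt_ub _ 0 1 E) as [B HB]. rewrite Rmin_left, Rmax_right in HB by lra.
  assert (HB0 : 0 <= B) by (apply (Rle_trans _ (Rabs (lam * V 0))); [apply Rabs_pos|apply (HB 0); lra]).
  exists (Rabs (W 0) + B). split; [pose proof (Rabs_pos (W 0)); lra|].
  intros x Hx. destruct (flux_dW 0 x ltac:(lra) ltac:(lra) ltac:(lra)) as [Ex Hx'].
  assert (Hint : Rabs (RInt (fun s => lam * V s) 0 x) <= (x - 0) * B)
    by (apply abs_RInt_le_const; auto; try lra; intros t Ht; apply HB; lra).
  rewrite Hx' in Hint. replace (W x) with (W 0 + (W x - W 0)) by ring.
  eapply Rle_trans; [apply Rabs_triang|]. nra.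
Qed.

Lemma flux_V_nonneg x : 0 <= x <= 1 -> (forall s, 0 < s < x -> 0 <= W s) -> 0 <= V x.
Proof.
  intros Hx HWs. rewrite <- (is_RInt_unique_R _ 0 x (V x)) by (apply HV; auto).
  apply RInt_ge_0; [lra|eexists; apply HV; auto|].
  intros s Hs. apply Rmult_le_pos; [apply pow2_ge_0|auto].
Qed.

Lemma flux_V_of_W_zero x : 0 <= x <= 1 -> (forall s, 0 < s < x -> W s = 0) -> V x = 0.
Proof.
  intros Hx HWs. rewrite <- (is_RInt_unique_R _ 0 x (V x)) by (apply HV; auto).
  rewrite (RInt_ext _ (fun _ => 0)); [rewrite RInt_const; apply Rmult_0_r|].
  intros s Hs. rewrite Rmin_left, Rmax_right in Hs by lra. rewrite HWs by lra. apply Rmult_0_r.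
Qed.

Lemma flux_W_le x y : 0 <= x -> x <= y -> y <= 1 -> (forall s, x < s < y -> 0 <= V s) ->
  W x <= W y.
Proof.
  intros Hx Hxy Hy HVs. destruct (flux_dW x y Hx Hxy Hy) as [E Hd].
  assert (0 <= RInt (fun s => lam * V s) x y)
    by (apply RInt_ge_0; auto; intros s Hs; apply Rmult_le_pos; [lra|auto]).
  lra.
Qed.

Lemma flux_continuous x : 0 < x < 1 -> continuous W x.
Proof.
  intros Hx.
  assert (C : continuous (fun z => W z - W 0) x).
  { apply (continuous_RInt_1 (fun s => lam * V s) 0 x).
    apply (locally_interval _ x 0 1); simpl; try lra. intros y Hy0 Hy1. apply HW. lra. }
  apply (continuous_ext (fun z => W 0 + (W z - W 0))); [intros; simpl; lra|].
  apply (continuous_plus (fun _ => W 0) (fun z => W z - W 0)); [apply continuous_const|exact C].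
Qed.

(* Uniqueness for the Cauchy problem: on a step of length [delta], a bound [beta] on [W]
   integrates twice to a bound [beta / 2]. *)
Lemma flux_zero : W 0 = 0 -> forall x, 0 <= x <= 1 -> W x = 0.
Proof.
  intros H0. destruct flux_W_bounded as (Wm & HWm0 & HWm). pose proof flux_Mq_nonneg.
  destruct (exists_small_step (lam * Mq) (/ 2)) as (delta & Hd & Hkey); [lra|].
  intros x Hx. apply (step_induction (fun x => x <= 1 -> W x = 0) delta); try lra.
  intros x1 y Hx1 Hy IH Hy1.
  assert (Wx1 : W x1 = 0) by (apply IH; lra).
  assert (Vx1 : V x1 = 0) by (apply flux_V_of_W_zero; [lra|]; intros s Hs; apply IH; lra).
  apply (eq0_of_halving (fun s => x1 <= s <= y) W Wm); [intros; apply HWm; lra| |lra].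
  intros beta Hbeta s Hs.
  assert (Hb0 : 0 <= beta) by (pose proof (Rabs_pos (W x1)); specialize (Hbeta x1 ltac:(lra)); lra).
  assert (HVt : forall t, x1 <= t <= s -> Rabs (V t) <= delta * (Mq * beta)).
  { intros t Ht. destruct (flux_dV x1 t ltac:(lra) ltac:(lra) ltac:(lra)) as [E Hd1].
    assert (B : Rabs (RInt (fun s => q s ^ 2 * W s) x1 t) <= (t - x1) * (Mq * beta)).
    { apply abs_RInt_le_const; auto; try lra. intros u Hu. rewrite Rabs_mult.
      apply Rmult_le_compat; try apply Rabs_pos.
      - rewrite Rabs_pos_eq by apply pow2_ge_0. apply HqM. lra.
      - apply Hbeta. lra. }
    rewrite Hd1, Vx1, Rminus_0_r in B. eapply Rle_trans; [exact B|].
    apply Rmult_le_compat_r; [nra|lra]. }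
  destruct (flux_dW x1 s ltac:(lra) ltac:(lra) ltac:(lra)) as [E Hd1].
  assert (B : Rabs (RInt (fun s => lam * V s) x1 s) <= (s - x1) * (lam * (delta * (Mq * beta)))).
  { apply abs_RInt_le_const; auto; try lra. intros t Ht.
    rewrite Rabs_mult, Rabs_pos_eq by lra. apply Rmult_le_compat_l; [lra|apply HVt; lra]. }
  rewrite Hd1, Wx1, Rminus_0_r in B. eapply Rle_trans; [exact B|].
  assert (0 <= lam * (delta * (Mq * beta))) by (repeat apply Rmult_le_pos; lra).
  assert ((s - x1) * (lam * (delta * (Mq * beta))) <= delta * (lam * (delta * (Mq * beta))))
    by (apply Rmult_le_compat_r; lra).
  assert (lam * Mq * delta * (delta * beta) <= / 2 * (delta * beta))
    by (apply Rmult_le_compat_r; [apply Rmult_le_pos|]; lra).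
  assert (delta * beta <= 1 * beta) by (apply Rmult_le_compat_r; lra).
  lra.
Qed.

(* Positivity: [V >= 0] as long as [W > 0], and on a short step [V] cannot become negative
   enough to bring [W] from [W 0] down to [W 0 / 2]. *)
Lemma flux_pos : 0 < W 0 -> forall x, 0 <= x <= 1 -> 0 < W x.
Proof.
  intros H0. destruct flux_W_bounded as (Wm & HWm0 & HWm). pose proof flux_Mq_nonneg.
  destruct (exists_small_step (lam * (Mq * Wm)) (W 0 / 2)) as (delta & Hd & Hkey); [lra|].
  intros x Hx. apply (step_induction (fun x => x <= 1 -> 0 < W x) delta); try lra.
  intros x1 y Hx1 Hy IH Hy1.
  assert (HVx1 : forall s, 0 <= s <= x1 -> 0 <= V s)
    by (intros s Hs; apply flux_V_nonneg; [lra|]; intros t Ht; apply Rlt_le, IH; lra).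
  assert (HWx1 : W 0 <= W x1)
    by (apply flux_W_le; try lra; intros s Hs; apply HVx1; lra).
  assert (HVt : forall t, x1 <= t <= y -> - (delta * (Mq * Wm)) <= V t).
  { intros t Ht. destruct (flux_dV x1 t ltac:(lra) ltac:(lra) ltac:(lra)) as [E Hd1].
    assert (B : Rabs (RInt (fun s => q s ^ 2 * W s) x1 t) <= (t - x1) * (Mq * Wm)).
    { apply abs_RInt_le_const; auto; try lra. intros u Hu. rewrite Rabs_mult.
      apply Rmult_le_compat; try apply Rabs_pos.
      - rewrite Rabs_pos_eq by apply pow2_ge_0. apply HqM. lra.
      - apply HWm. lra. }
    rewrite Hd1 in B. apply Rabs_le_between in B.
    assert ((t - x1) * (Mq * Wm) <= delta * (Mq * Wm)) by (apply Rmult_le_compat_r; nra).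
    pose proof (HVx1 x1 ltac:(lra)). lra. }
  destruct (flux_dW x1 y ltac:(lra) ltac:(lra) ltac:(lra)) as [E Hd1].
  assert (B : RInt (fun _ => lam * - (delta * (Mq * Wm))) x1 y <= RInt (fun s => lam * V s) x1 y).
  { apply RInt_le; auto; try lra; [apply ex_RInt_const|].
    intros t Ht. apply Rmult_le_compat_l; [lra|apply HVt; lra]. }
  rewrite RInt_const, Hd1 in B.
  change (scal (y - x1) (lam * - (delta * (Mq * Wm)))) with ((y - x1) * (lam * - (delta * (Mq * Wm)))) in B.
  assert ((y - x1) * (lam * (delta * (Mq * Wm))) <= delta * (lam * (delta * (Mq * Wm))))
    by (apply Rmult_le_compat_r; [repeat apply Rmult_le_pos; lra|lra]).
  assert (lam * (Mq * Wm) * delta * delta <= W 0 / 2 * delta)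
    by (apply Rmult_le_compat_r; lra).
  assert (W 0 / 2 * delta <= W 0 / 2 * 1) by (apply Rmult_le_compat_l; lra).
  lra.
Qed.

Lemma flux_increasing_at_rate (m : R) : 0 < W 0 -> (forall x, 0 <= x <= 1 -> m <= q x ^ 2) ->
  increasing_at_rate W (lam * m / 2).
Proof.
  intros H0 Hqm. pose proof (flux_pos H0) as Hpos.
  assert (HVnn : forall s, 0 <= s <= 1 -> 0 <= V s)
    by (intros s Hs; apply flux_V_nonneg; auto; intros t Ht; apply Rlt_le, Hpos; lra).
  split; [exact Hpos|]. intros c d Hc Hcd Hd.
  assert (Hlow : forall s, c <= s <= d -> (s - c) * (m * W c) <= V s).
  { intros s Hs. destruct (flux_dV c s Hc ltac:(lra) ltac:(lra)) as [E Hd1].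
    assert (B : RInt (fun _ => m * W c) c s <= RInt (fun s => q s ^ 2 * W s) c s).
    { apply RInt_le; auto; try lra; [apply ex_RInt_const|]. intros t Ht.
      assert (W c <= W t)
        by (apply flux_W_le; try lra; intros u Hu; apply HVnn; lra).
      pose proof (Hqm t ltac:(lra)). pose proof (Hpos c ltac:(lra)).
      pose proof (pow2_ge_0 (q t)). nra. }
    rewrite RInt_const, Hd1 in B.
    change (scal (s - c) (m * W c)) with ((s - c) * (m * W c)) in B.
    pose proof (HVnn c ltac:(lra)). lra. }
  assert (Hlin : is_RInt (fun s => lam * ((s - c) * (m * W c))) c d
                   (lam * (m * W c) * ((d - c) ^ 2 / 2))).
  { apply (is_RInt_ext (fun s => lam * (m * W c) * (s - c))).
    - intros s _. change (lam * (m * W c) * (s - c) = lam * ((s - c) * (m * W c))). ring.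
    - apply is_RInt_scal_R, is_RInt_shift_id. }
  destruct (flux_dW c d Hc ltac:(lra) Hd) as [E Hd1].
  assert (lam * (m * W c) * ((d - c) ^ 2 / 2) <= W d - W c).
  { rewrite <- Hd1, <- (is_RInt_unique_R _ _ _ _ Hlin).
    apply RInt_le; auto; try lra; [eexists; exact Hlin|].
    intros s Hs. apply Rmult_le_compat_l; [lra|apply Hlow; lra]. }
  lra.
Qed.

End Flux.

Lemma Derive_primitive (f F : R -> R) x : 0 < x < 1 ->
  (forall y, 0 <= y <= 1 -> is_RInt f 0 y (F y)) -> continuous f x -> Derive F x = f x.
Proof.
  intros Hx HF Hc. apply is_derive_unique, (is_derive_RInt f F 0 x); [|exact Hc].
  apply (locally_interval _ x 0 1); simpl; try lra. intros y Hy0 Hy1. apply HF. lra.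
Qed.

Lemma continuous_locally_constant_mul (g w : R -> R) x :
  locally_constant_at g x -> continuous w x -> continuous (fun s => g s * w s) x.
Proof.
  intros (a & b & c & Hx & Hc) Hw.
  apply (continuous_ext_loc _ _ x) with (2 := continuous_scal_r c w x Hw).
  apply (locally_interval _ x a b); simpl; try lra.
  intros y Hy0 Hy1. rewrite (Hc y) by lra. reflexivity.
Qed.

(* [v' = q^2 w] for the flux [w]; after fixing the sign of [w 0], which cannot vanish since
   [v] is nontrivial, the flux is positive and increasing. *)
Lemma flux_weight (q : R -> R) (v : R -> R -> R) (lam m Mq : R) : is_v q v -> 0 < lam ->
  (forall x, 0 <= x <= 1 -> m <= q x ^ 2) -> (forall x, 0 <= x <= 1 -> q x ^ 2 <= Mq) ->
  exists sg W, (sg = 1 \/ sg = -1) /\ increasing_at_rate W (lam * m / 2) /\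
    forall x, 0 < x < 1 -> locally_constant_at (fun s => q s ^ 2) x ->
      Derive (fun y => v y lam) x = sg * q x ^ 2 * W x.
Proof.
  intros Hv Hlam Hqm HqM.
  destruct (Hv lam ltac:(lra)) as (_ & (xs & Hxs & Hvxs) & w & Hw).
  assert (HV : forall x, 0 <= x <= 1 -> is_RInt (fun s => q s ^ 2 * w s) 0 x (v x lam))
    by (intros x Hx; apply Hw; auto).
  assert (HW : forall x, 0 <= x <= 1 -> is_RInt (fun s => lam * v s lam) 0 x (w x - w 0)).
  { intros x Hx. destruct (proj2 (Hw x Hx)) as (I & HI & ->).
    replace (w 0 + lam * I - w 0) with (lam * I) by ring. apply is_RInt_scal_R, HI. }
  assert (Hder : forall x, 0 < x < 1 -> locally_constant_at (fun s => q s ^ 2) x ->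
      Derive (fun y => v y lam) x = q x ^ 2 * w x).
  { intros x Hx Hloc. apply (Derive_primitive (fun s => q s ^ 2 * w s)); auto.
    apply continuous_locally_constant_mul; auto.
    apply (flux_continuous (fun s => v s lam) w lam); auto. }
  destruct (Rtotal_order (w 0) 0) as [Hneg | [Hzero | Hpos]].
  - exists (-1), (fun x => - w x). split; [right; reflexivity|split].
    + apply (flux_increasing_at_rate q (fun s => - v s lam) (fun x => - w x) lam Mq); auto; try lra.
      * intros x Hx. apply (is_RInt_ext (fun s => - (q s ^ 2 * w s)));
          [intros; apply Ropp_mult_distr_r|apply is_RInt_opp_R, HV; auto].
      * intros x Hx. replace (- w x - - w 0) with (- (w x - w 0)) by ring.
        apply (is_RInt_ext (fun s => - (lam * v s lam)));
          [intros; apply Ropp_mult_distr_r|apply is_RInt_opp_R, HW; auto].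
    + intros x Hx Hloc. rewrite Hder by auto. ring.
  - exfalso. apply Hvxs.
    apply (flux_V_of_W_zero q (fun s => v s lam) w HV xs Hxs).
    intros s Hs. apply (flux_zero q (fun s => v s lam) w lam Mq); auto. lra.
  - exists 1, w. split; [left; reflexivity|split].
    + apply (flux_increasing_at_rate q (fun s => v s lam) w lam Mq); auto.
    + intros x Hx Hloc. rewrite Hder by auto. ring.
Qed.

Lemma psi_products_orthogonal (q1 q2 : R -> R) (psi1 psi2 : R -> R -> R) (h : R -> R) :
  pw_const (fun x => q1 x ^ 2) -> (forall x, 0 <= x <= 1 -> 0 < q1 x ^ 2) ->
  is_psi q1 psi1 -> is_psi q2 psi2 ->
  (forall k, 0 < k -> is_RInt (fun x => h x * psi1 x k * psi2 x k) 0 1 0) ->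
  orthogonal_to_steep_weights h.
Proof.
  intros Hq1 Hpos1 Hpsi1 Hpsi2 Hint r0.
  destruct (pw_const_pos_lower_bound _ Hq1 Hpos1) as (m1 & Hm1 & Hqm1).
  destruct (exists_pos_sqr_mult_ge (m1 / 2) r0) as (k & Hk & Hr0); [lra|].
  exists (k ^ 2 * m1 / 2), (fun x => psi1 x k * psi2 x k). split; [lra|split].
  - apply (increasing_at_rate_mul _ _ _ (k ^ 2 * 0 / 2)); [lra| |].
    + apply (psi_increasing_at_rate q1 psi1 k); auto. lra.
    + apply (psi_increasing_at_rate q2 psi2 k); [auto|lra|]. intros; apply pow2_ge_0.
  - apply (is_RInt_ext (fun x => h x * psi1 x k * psi2 x k));
      [intros; apply Rmult_assoc|apply Hint; auto].
Qed.

Lemma flux_products_orthogonal (q1 q2 : R -> R) (v1 v2 : R -> R -> R) (h : R -> R) :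
  pw_const (fun x => q1 x ^ 2) -> pw_const (fun x => q2 x ^ 2) ->
  (forall x, 0 <= x <= 1 -> 0 < q1 x ^ 2) ->
  is_v q1 v1 -> is_v q2 v2 ->
  (forall lam, 0 < lam ->
     is_RInt (fun x => h x * Derive (fun y => v1 y lam) x
                           * Derive (fun y => v2 y lam) x) 0 1 0) ->
  orthogonal_to_steep_weights (fun x => h x * (q1 x ^ 2 * q2 x ^ 2)).
Proof.
  intros Hq1 Hq2 Hpos1 Hv1 Hv2 Hint r0.
  destruct (pw_const_pos_lower_bound _ Hq1 Hpos1) as (m1 & Hm1 & Hqm1).
  destruct (pw_const_bounded _ Hq1) as [M1 HM1], (pw_const_bounded _ Hq2) as [M2 HM2].
  destruct (pw_const_locally_constant _ Hq1) as [l1 Hl1].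
  destruct (pw_const_locally_constant _ Hq2) as [l2 Hl2].
  destruct (exists_pos_sqr_mult_ge (m1 / 2) r0) as (k & Hk & Hr0); [lra|].
  set (lam := k ^ 2). assert (Hlam : 0 < lam) by (apply pow_lt; lra).
  destruct (flux_weight q1 v1 lam m1 M1) as (s1 & W1 & Hs1 & HW1 & D1); auto;
    [intros x Hx; eapply Rle_trans; [apply Rle_abs|auto]|].
  destruct (flux_weight q2 v2 lam 0 M2) as (s2 & W2 & Hs2 & HW2 & D2); auto;
    [intros; apply pow2_ge_0|intros x Hx; eapply Rle_trans; [apply Rle_abs|auto]|].
  exists (lam * m1 / 2), (fun x => W1 x * W2 x). split; [unfold lam; lra|split].
  - apply (increasing_at_rate_mul W1 W2 _ (lam * 0 / 2)); auto. lra.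
  - pose proof (is_RInt_scal_R _ 0 1 (s1 * s2) 0 (Hint lam Hlam)) as H.
    rewrite Rmult_0_r in H.
    refine (is_RInt_ext_off_list _ _ (l1 ++ l2) 0 1 0 _ _ H); [lra|].
    intros x Hx Hn.
    assert (Hn1 : ~ In x l1) by (intros Hin; apply Hn, in_or_app; auto).
    assert (Hn2 : ~ In x l2) by (intros Hin; apply Hn, in_or_app; auto).
    rewrite D1, D2 by auto.
    destruct Hs1 as [-> | ->], Hs2 as [-> | ->]; ring.
Qed.

Theorem theorem2 (q1 q2 : R -> R) (psi1 psi2 v1 v2 : R -> R -> R) :
  pw_const (fun x => q1 x ^ 2) -> pw_const (fun x => q2 x ^ 2) ->
  (forall x, 0 <= x <= 1 -> 0 < q1 x ^ 2) ->
  (forall x, 0 <= x <= 1 -> 0 < q2 x ^ 2) ->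
  is_psi q1 psi1 -> is_psi q2 psi2 ->
  is_v q1 v1 -> is_v q2 v2 ->
  (forall h : R -> R, pw_const h ->
     (forall k, 0 < k -> is_RInt (fun x => h x * psi1 x k * psi2 x k) 0 1 0) ->
     zero_on_01 h) /\
  (forall h : R -> R, pw_const h ->
     (forall lam, 0 < lam ->
        is_RInt (fun x => h x * Derive (fun y => v1 y lam) x
                              * Derive (fun y => v2 y lam) x) 0 1 0) ->
     zero_on_01 h).
Proof.
  intros Hq1 Hq2 Hpos1 Hpos2 Hpsi1 Hpsi2 Hv1 Hv2. split; intros h Hh Hint.
  - apply zero_on_01_of_orthogonality; auto.
    exact (psi_products_orthogonal q1 q2 psi1 psi2 h Hq1 Hpos1 Hpsi1 Hpsi2 Hint).
  - destruct (pw_const_bounded _ Hq1) as [M1 HM1], (pw_const_bounded _ Hq2) as [M2 HM2].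
    apply (zero_on_01_of_weighted_orthogonality h (fun x => q1 x ^ 2 * q2 x ^ 2) (M1 * M2) Hh).
    + intros x Hx. rewrite Rabs_mult. apply Rmult_le_compat; auto using Rabs_pos.
    + apply left_constant_mul; apply pw_const_left_constant; auto.
    + intros x Hx. apply Rmult_lt_0_compat; auto.
    + exact (flux_products_orthogonal q1 q2 v1 v2 h Hq1 Hq2 Hpos1 Hv1 Hv2 Hint).
Qed.
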